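(* Let $k$ be a positive integer and let $(X,Y)$ be a partition of $\{1,2,\dots,n\}$ into two sets. Call a pair $(a,b)$ bad if $a<b$, $a\in Y$ and $b\in X$. Assume that for every integer $t$ there are at most $k$ bad pairs $(a,b)$ with $a\le t<b$. Then the total number of bad pairs is at most $k(1+\ln k)$. *)

From Stdlib Require Import Reals List Arith ZArith Bool.
Import ListNotations.

(* X : nat -> bool is the indicator of X within {1,...,n}; Y is its complement
   in {1,...,n}.  A pair (a,b) is bad if a < b, a \in Y (i.e. X a = false), b \in X. *)
Definition is_bad (X : nat -> bool) (a b : nat) : bool :=
  Nat.ltb a b && negb (X a) && X b.

Definition bad_pairs (n : nat) (X : nat -> bool) : list (nat * nat) :=
  filter (fun p => is_bad X (fst p) (snd p)) (list_prod (seq 1 n) (seq 1 n)).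

Definition bad_crossing (n : nat) (X : nat -> bool) (t : Z) : nat :=
  length (filter (fun p => (Z.leb (Z.of_nat (fst p)) t && Z.ltb t (Z.of_nat (snd p)))%bool)
                 (bad_pairs n X)).

From Stdlib Require Import Reals List Arith ZArith Bool.
From Stdlib Require Import Lia Lra.

(* Write Y for the complement of X in {1,...,n}, and for t let
   z(t) (= [above t]) be the number of elements of X larger than t and y(t)
   (= [ys t]) the number of elements of Y that are at most t.  A bad pair with left end a in Y has its
   right end among the z(a) elements of X above a, so the total number of bad
   pairs is the sum of z(a) over a in Y; and for t in {1,...,n} the bad pairs
   crossing t number exactly y(t) * z(t).  If a is the j-th element of Y, the
   crossing hypothesis at t = a gives j * z(a) <= k, i.e. z(a) <= floor(k/j).
   Hence the total is at most sum_{j >= 1} floor(k/j) = sum_{j=1}^k floor(k/j)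
   <= k * H_k <= k * (1 + ln k), where H_k is the k-th harmonic number. *)

Definition count {A} (p : A -> bool) (l : list A) : nat := length (filter p l).

Lemma count_ext {A} (p q : A -> bool) (l : list A) :
  (forall x, In x l -> p x = q x) -> count p l = count q l.
Proof. intros H; unfold count; now rewrite (filter_ext_in _ _ _ H). Qed.

Lemma count_none {A} (p : A -> bool) (l : list A) :
  (forall x, p x = false) -> count p l = 0.
Proof. intros H; unfold count; now rewrite (filter_ext _ _ H), filter_false. Qed.

Lemma filter_filter_andb {A} (p q : A -> bool) (l : list A) :
  filter q (filter p l) = filter (fun x => p x && q x) l.
Proof.
  induction l as [|a l IH]; simpl; auto.
  destruct (p a); simpl; auto; destruct (q a); simpl; congruence.
Qed.

Lemma count_list_prod {A B} (f : A * B -> bool) (l1 : list A) (l2 : list B) :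
  length (filter f (list_prod l1 l2)) = list_sum (map (fun a => count (fun c => f (a, c)) l2) l1).
Proof.
  induction l1 as [|a l1 IH]; simpl; auto.
  rewrite filter_app, length_app, IH, filter_map_swap, length_map; reflexivity.
Qed.

Lemma list_sum_indicator {A} (q : A -> bool) (C : nat) (l : list A) :
  list_sum (map (fun a => if q a then C else 0) l) = count q l * C.
Proof. unfold count; induction l as [|a l IH]; simpl; auto; destruct (q a); simpl; lia. Qed.

Lemma Z_leb_of_nat (a b : nat) : Z.leb (Z.of_nat a) (Z.of_nat b) = Nat.leb a b.
Proof. destruct (Z.leb_spec (Z.of_nat a) (Z.of_nat b)), (Nat.leb_spec a b); auto; lia. Qed.

Lemma Z_ltb_of_nat (a b : nat) : Z.ltb (Z.of_nat a) (Z.of_nat b) = Nat.ltb a b.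
Proof. destruct (Z.ltb_spec (Z.of_nat a) (Z.of_nat b)), (Nat.ltb_spec a b); auto; lia. Qed.

Section Counting.
Variables (n : nat) (X : nat -> bool).

Definition above (t : nat) : nat := count (fun c => (t <? c) && X c) (seq 1 n).

Definition ys (s : nat) : nat := count (fun c => negb (X c)) (seq 1 s).

Lemma ys_succ (s : nat) :
  ys (S s) = ys s + (if X (S s) then 0 else 1).
Proof.
  unfold ys, count; rewrite seq_S, filter_app, length_app; simpl.
  destruct (X (S s)); reflexivity.
Qed.

Definition bad_from (a : nat) : nat := if X a then 0 else above a.

Lemma bad_pairs_by_left_end :
  length (bad_pairs n X) = list_sum (map bad_from (seq 1 n)).
Proof.
  unfold bad_pairs; rewrite count_list_prod; f_equal; apply map_ext; intros a.
  unfold bad_from, above, is_bad; simpl.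
  destruct (X a); simpl.
  - apply count_none; intros c; now rewrite andb_false_r.
  - apply count_ext; intros c _; now rewrite andb_true_r.
Qed.

Lemma ys_as_prefix_count (t : nat) : t <= n ->
  count (fun a => (a <=? t) && negb (X a)) (seq 1 n) = ys t.
Proof.
  intros Ht; unfold ys; replace n with (t + (n - t)) by lia.
  rewrite seq_app; unfold count; rewrite filter_app, length_app.
  rewrite (filter_ext_in _ (fun c => negb (X c)) (seq 1 t)),
    (filter_ext_in _ (fun _ => false) (seq (1 + t) _)), filter_false;
    simpl; try lia; intros c Hc; apply in_seq in Hc;
    destruct (Nat.leb_spec c t); simpl; auto; lia.
Qed.

Lemma bad_crossing_at (t : nat) : t <= n ->
  bad_crossing n X (Z.of_nat t) = ys t * above t.
Proof.
  intros Ht.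
  assert (Hrows : bad_crossing n X (Z.of_nat t) =
                  list_sum (map (fun a => if (a <=? t) && negb (X a) then above t else 0)
                                (seq 1 n))).
  { unfold bad_crossing, bad_pairs; rewrite filter_filter_andb, count_list_prod.
    f_equal; apply map_ext; intros a; simpl.
    rewrite Z_leb_of_nat.
    unfold above, is_bad; simpl.
    destruct (Nat.leb_spec a t), (X a); simpl;
      try (apply count_none; intros c; now rewrite ?andb_false_r, ?andb_false_l).
    apply count_ext; intros c _; rewrite Z_ltb_of_nat.
    destruct (Nat.ltb_spec a c), (Nat.ltb_spec t c), (X c); simpl; auto; lia. }
  now rewrite Hrows, list_sum_indicator, ys_as_prefix_count.
Qed.

End Counting.

Fixpoint floor_harmonic (k m : nat) : nat :=
  match m with
  | 0 => 0
  | S m' => floor_harmonic k m' + k / S m'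
  end.

Lemma weighted_prefix_bound (k : nat) (X : nat -> bool) (g : nat -> nat) (s : nat) :
  (forall a, 1 <= a <= s -> X a = false -> ys X a * g a <= k) ->
  list_sum (map (fun a => if X a then 0 else g a) (seq 1 s)) <= floor_harmonic k (ys X s).
Proof.
  induction s as [|s IH]; intros Hg; [simpl; lia|].
  rewrite seq_S, map_app, list_sum_app, ys_succ; simpl.
  assert (IH' := IH (fun a Ha => Hg a ltac:(lia))).
  destruct (X (S s)) eqn:Ex; [rewrite !Nat.add_0_r; exact IH'|].
  assert (Hj : g (S s) <= k / S (ys X s)).
  { apply Nat.div_le_lower_bound; [lia|].
    specialize (Hg (S s) ltac:(lia) Ex); rewrite ys_succ, Ex in Hg.
    rewrite Nat.add_1_r in Hg; exact Hg. }
  rewrite Nat.add_1_r.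
  change (floor_harmonic k (S (ys X s))) with (floor_harmonic k (ys X s) + k / S (ys X s)).
  rewrite Nat.add_0_r; lia.
Qed.

(* The terms floor(k/j) vanish for j > k, so the sum never exceeds its value at k. *)
Lemma floor_harmonic_le_at_k (k m : nat) : floor_harmonic k m <= floor_harmonic k k.
Proof.
  assert (Hmono : forall j d, floor_harmonic k j <= floor_harmonic k (j + d)).
  { intros j d; induction d; rewrite ?Nat.add_0_r, ?Nat.add_succ_r; cbn [floor_harmonic]; lia. }
  destruct (Nat.le_gt_cases m k) as [Hle | Hgt].
  - specialize (Hmono m (k - m)); replace (m + (k - m)) with k in Hmono by lia; exact Hmono.
  - replace m with (k + (m - k)) by lia.
    induction (m - k) as [|d IH]; rewrite ?Nat.add_0_r, ?Nat.add_succ_r; cbn [floor_harmonic]; auto.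
    rewrite (Nat.div_small k); lia.
Qed.

Fixpoint harmonic (m : nat) : R :=
  match m with
  | 0 => 0%R
  | S m' => (harmonic m' + / INR (S m'))%R
  end.

Lemma floor_harmonic_le_harmonic (k m : nat) :
  (INR (floor_harmonic k m) <= INR k * harmonic m)%R.
Proof.
  induction m as [|m IH]; cbn [floor_harmonic harmonic]; [simpl; lra|].
  rewrite plus_INR.
  assert (Hpos : (0 < INR (S m))%R) by (apply lt_0_INR; lia).
  assert (Hdiv : (INR (k / S m) <= INR k * / INR (S m))%R).
  { apply (Rmult_le_reg_l (INR (S m))); auto.
    replace (INR (S m) * (INR k * / INR (S m)))%R with (INR k) by (field; lra).
    rewrite <- mult_INR; apply le_INR, Nat.Div0.mul_div_le. }
  lra.
Qed.

(* Comparison of 1/(a+1) with an increment of ln, from ln x <= x - 1. *)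
Lemma inv_succ_le_ln_diff (a : R) : (0 < a)%R -> (/ (a + 1) <= ln (a + 1) - ln a)%R.
Proof.
  intros Ha.
  assert (Hq : (0 < a / (a + 1))%R) by (apply Rdiv_lt_0_compat; lra).
  assert (Hle : (ln (a / (a + 1)) <= a / (a + 1) - 1)%R).
  { pose proof (exp_ineq1_le (ln (a / (a + 1)))) as He; rewrite exp_ln in He; lra. }
  assert (Hfrac : (a / (a + 1) - 1 = - / (a + 1))%R) by (field; lra).
  assert (Hlog : ln (a / (a + 1)) = (ln a - ln (a + 1))%R).
  { unfold Rdiv; rewrite ln_mult, ln_Rinv; try apply Rinv_0_lt_compat; lra. }
  lra.
Qed.

Lemma harmonic_le_ln (m : nat) : (harmonic (S m) <= 1 + ln (INR (S m)))%R.
Proof.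
  induction m as [|m IH].
  - simpl; rewrite ln_1; lra.
  - change (harmonic (S (S m))) with (harmonic (S m) + / INR (S (S m)))%R.
    rewrite (S_INR (S m)).
    pose proof (inv_succ_le_ln_diff (INR (S m)) ltac:(apply lt_0_INR; lia)).
    lra.
Qed.

Theorem mainTheorem10 (n k : nat) (X : nat -> bool) (hk : (0 < k)%nat)
  (hcross : forall t : Z, (bad_crossing n X t <= k)%nat) :
  (INR (length (bad_pairs n X)) <= INR k * (1 + ln (INR k)))%R.
Proof.
  assert (Htotal : length (bad_pairs n X) <= floor_harmonic k k).
  { rewrite bad_pairs_by_left_end.
    eapply Nat.le_trans; [apply (weighted_prefix_bound k X (above n X) n) |].
    - intros a Ha _; rewrite <- bad_crossing_at by lia; apply hcross.
    - apply floor_harmonic_le_at_k. }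
  apply le_INR in Htotal.
  pose proof (floor_harmonic_le_harmonic k k) as Hharm.
  destruct k as [|k']; [lia|].
  pose proof (harmonic_le_ln k') as Hln.
  pose proof (pos_INR (S k')) as Hk.
  pose proof (Rmult_le_compat_l _ _ _ Hk Hln).
  lra.
Qed.
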